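(* Let $T\in(0,\infty]$ and let $u(x,t)=(u_1,u_2)$, $x=(x_1,x_2)\in\mathbb{R}^2$, $t\in[0,T)$, be a smooth velocity field given by a smooth stream function $\psi(x,t)$ via $u=\nabla^{\perp}\psi=\left(-\frac{\partial\psi}{\partial x_2},\frac{\partial\psi}{\partial x_1}\right)$, and let $\theta$ be a smooth solution of $(\partial_t+u\cdot\nabla)\theta=0$ on $[0,T)$. Assume the fluid forms a sharp front at time $T$ (in the sense defined in the context), with curves $x_2=f_\pm(x_1,t)$, $x_1\in[a,b]$. Then for all $t\in[0,T)$, $$\frac{d}{dt}\int_a^b\big[f_+(x_1,t)-f_-(x_1,t)\big]\,dx_1=\psi(b,f_+(b,t),t)-\psi(b,f_-(b,t),t)+\psi(a,f_-(a,t),t)-\psi(a,f_+(a,t),t).$$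
   Context: Sharp front at time $T$: there are an interval $[a,b]$ with $a<b$ and functions $f_\pm\in C^1([a,b]\times[0,T))$ such that (i) $f_-(x_1,t)<f_+(x_1,t)$ for all $x_1\in[a,b]$, $t\in[0,T)$; (ii) the arcs $\Gamma_\pm(t)=\{(x_1,x_2): x_2=f_\pm(x_1,t),\ x_1\in[a,b]\}$ move with the fluid, i.e. $u_2(x_1,x_2,t)=\frac{\partial f_\pm}{\partial x_1}(x_1,t)\,u_1(x_1,x_2,t)+\frac{\partial f_\pm}{\partial t}(x_1,t)$ at $x_2=f_\pm(x_1,t)$, for all $x_1\in[a,b]$, $t\in[0,T)$; (iii) $\lim_{t\to T^-}(f_+(x_1,t)-f_-(x_1,t))=0$ for all $x_1\in[a,b]$; and (iv) $f_+(x_1,t)-f_-(x_1,t)$ is bounded on $[a,b]\times[0,T)$. *)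

From Stdlib Require Import Reals List.
From Coquelicot Require Import Coquelicot.
Open Scope R_scope.

Definition tdom (T : Rbar) (t : R) : Prop := 0 <= t /\ Rbar_lt (Finite t) T.

(* Derivative of g at x relative to the set D (one-sided at endpoints of intervals). *)
Definition is_deriv_within (D : R -> Prop) (g : R -> R) (x l : R) : Prop :=
  filterlim (fun h => (g (x + h) - g x) / h)
    (within (fun h => h <> 0 /\ D (x + h)) (locally 0)) (locally l).

Definition at_T (T : Rbar) : (R -> Prop) -> Prop :=
  match T with
  | Finite r => at_left r
  | p_infty => Rbar_locally p_infty
  | m_infty => Rbar_locally m_infty
  end.

Definition cont3_on (T : Rbar) (F : R -> R -> R -> R) : Prop :=
  forall x1 x2 t, tdom T t ->
  forall eps, 0 < eps -> exists delta, 0 < delta /\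
    forall y1 y2 s, tdom T s -> Rabs (y1 - x1) < delta -> Rabs (y2 - x2) < delta ->
      Rabs (s - t) < delta -> Rabs (F y1 y2 s - F x1 x2 t) < eps.

Definition cont2_on (a b : R) (T : Rbar) (F : R -> R -> R) : Prop :=
  forall x t, a <= x <= b -> tdom T t ->
  forall eps, 0 < eps -> exists delta, 0 < delta /\
    forall y s, a <= y <= b -> tdom T s -> Rabs (y - x) < delta ->
      Rabs (s - t) < delta -> Rabs (F y s - F x t) < eps.

Inductive coord := X1 | X2 | Tm.

Definition partial_on (T : Rbar) (F G : R -> R -> R -> R) (c : coord) : Prop :=
  forall x1 x2 t, tdom T t ->
  match c with
  | X1 => is_deriv_within (fun _ => True) (fun s => F s x2 t) x1 (G x1 x2 t)
  | X2 => is_deriv_within (fun _ => True) (fun s => F x1 s t) x2 (G x1 x2 t)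
  | Tm => is_deriv_within (tdom T) (fun s => F x1 x2 s) t (G x1 x2 t)
  end.

(* Smooth (C^infinity) on R^2 x [0,T): all iterated partial derivatives exist
   and are continuous; D l is the iterated derivative along the list l. *)
Definition smooth_on (T : Rbar) (F : R -> R -> R -> R) : Prop :=
  exists D : list coord -> R -> R -> R -> R,
    (forall x1 x2 t, tdom T t -> D nil x1 x2 t = F x1 x2 t) /\
    (forall l c, partial_on T (D l) (D (c :: l)) c) /\
    (forall l, cont3_on T (D l)).

Definition C1_rect (a b : R) (T : Rbar) (f fx ft : R -> R -> R) : Prop :=
  (forall x t, a <= x <= b -> tdom T t ->
     is_deriv_within (fun y => a <= y <= b) (fun y => f y t) x (fx x t)) /\
  (forall x t, a <= x <= b -> tdom T t ->
     is_deriv_within (tdom T) (fun s => f x s) t (ft x t)) /\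
  cont2_on a b T f /\ cont2_on a b T fx /\ cont2_on a b T ft.

(* Differentiating under the integral sign, legitimate because the time derivatives of
   f+ and f- are uniformly continuous on the compact segment [a,b], turns the left-hand
   side into the integral of dt f+ - dt f-. Since u = grad^perp psi and each front curve
   moves with the fluid, dt f = u2 - u1 dx f is the x-derivative of psi(x, f(x,t), t), so
   each integral is an increment of psi between the endpoints. *)

From Stdlib Require Import Reals List Lra Classical IndefiniteDescription.
From Coquelicot Require Import Coquelicot.
Open Scope R_scope.

Lemma is_deriv_within_spec (D : R -> Prop) g x l :
  is_deriv_within D g x l <->
  forall eps, 0 < eps -> exists delta, 0 < delta /\
    forall h, h <> 0 -> D (x + h) -> Rabs h < delta ->
      Rabs ((g (x + h) - g x) / h - l) < eps.
Proof.
  split.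
  - intros H eps Heps.
    destruct (H (fun y => Rabs (y - l) < eps)) as [d Hd].
    { exists (mkposreal eps Heps). intros y By. exact By. }
    exists d. split; [apply cond_pos|].
    intros h Hh0 HD Hh. apply (Hd h); [|split; assumption].
    change (Rabs (h - 0) < d). rewrite Rminus_0_r. exact Hh.
  - intros H P [e He].
    destruct (H e (cond_pos e)) as [d [Hd Hh]].
    exists (mkposreal d Hd). intros h Bh [Hh0 HD]. apply He, Hh; try assumption.
    change (Rabs (h - 0) < d) in Bh. rewrite Rminus_0_r in Bh. exact Bh.
Qed.

Lemma is_derive_is_deriv_within (D : R -> Prop) g x l :
  is_derive g x l -> is_deriv_within D g x l.
Proof.
  intros H. apply is_derive_Reals in H. apply is_deriv_within_spec.
  intros eps Heps. destruct (H eps Heps) as [d Hd].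
  exists d. split; [apply cond_pos|]. intros h Hh0 _ Hh. apply Hd; assumption.
Qed.

Lemma is_deriv_within_True g x l :
  is_deriv_within (fun _ => True) g x l -> is_derive g x l.
Proof.
  intros H. apply is_derive_Reals. intros eps Heps.
  destruct (proj1 (is_deriv_within_spec _ g x l) H eps Heps) as [d [Hd Hh]].
  exists (mkposreal d Hd). intros h Hh0 Hhd. apply Hh; auto.
Qed.

Lemma is_deriv_within_continuous (D : R -> Prop) g x l :
  is_deriv_within D g x l ->
  forall eps, 0 < eps -> exists delta, 0 < delta /\
    forall y, D y -> Rabs (y - x) < delta -> Rabs (g y - g x) < eps.
Proof.
  intros H eps Heps.
  destruct (proj1 (is_deriv_within_spec D g x l) H 1 Rlt_0_1) as [d [Hd Hq]].
  set (K := Rabs l + 1).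
  assert (HK : 0 < K) by (unfold K; pose proof (Rabs_pos l); lra).
  exists (Rmin d (eps / K)). split; [apply Rmin_glb_lt; [lra | apply Rdiv_lt_0_compat; lra]|].
  intros y Dy Hy. apply Rmin_Rgt in Hy as [Hy1 Hy2].
  destruct (Req_dec y x) as [->|Hne].
  { unfold Rminus. rewrite Rplus_opp_r, Rabs_R0. exact Heps. }
  set (h := y - x) in *.
  assert (Hh0 : h <> 0) by (unfold h; lra).
  replace y with (x + h) in Dy |- * by (unfold h; ring).
  specialize (Hq h Hh0 Dy Hy1).
  assert (Hqb : Rabs ((g (x + h) - g x) / h) <= K).
  { pose proof (Rabs_triang l ((g (x + h) - g x) / h - l)) as Htri.
    replace (l + ((g (x + h) - g x) / h - l)) with ((g (x + h) - g x) / h) in Htri by ring.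
    unfold K. lra. }
  replace (g (x + h) - g x) with ((g (x + h) - g x) / h * h) by (field; exact Hh0).
  rewrite Rabs_mult.
  apply Rle_lt_trans with (K * Rabs h); [apply Rmult_le_compat_r; [apply Rabs_pos|exact Hqb]|].
  replace eps with (K * (eps / K)) by (field; lra).
  apply Rmult_lt_compat_l; assumption.
Qed.

Lemma is_deriv_within_minus (D : R -> Prop) f g x l m :
  is_deriv_within D f x l -> is_deriv_within D g x m ->
  is_deriv_within D (fun s => f s - g s) x (l - m).
Proof.
  rewrite !is_deriv_within_spec. intros Hf Hg eps Heps.
  destruct (Hf (eps / 2)) as [d1 [Hd1 H1]]; [lra|].
  destruct (Hg (eps / 2)) as [d2 [Hd2 H2]]; [lra|].
  exists (Rmin d1 d2). split; [apply Rmin_glb_lt; assumption|].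
  intros h Hh0 HD Hh. apply Rmin_Rgt in Hh as [Hh1 Hh2].
  specialize (H1 h Hh0 HD Hh1). specialize (H2 h Hh0 HD Hh2).
  replace ((f (x + h) - g (x + h) - (f x - g x)) / h - (l - m)) with
    (((f (x + h) - f x) / h - l) - ((g (x + h) - g x) / h - m)) by (field; exact Hh0).
  eapply Rle_lt_trans; [apply Rabs_triang|]. rewrite Rabs_Ropp. lra.
Qed.

Lemma Rabs_between c d s : Rmin c d <= s <= Rmax c d -> Rabs (s - c) <= Rabs (d - c).
Proof. unfold Rmin, Rmax; destruct Rle_dec; intros; split_Rabs; lra. Qed.

Lemma Rabs_mult_le x y X Y : Rabs x <= X -> Rabs y <= Y -> Rabs (x * y) <= X * Y.
Proof.
  intros Hx Hy. rewrite Rabs_mult.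
  apply Rmult_le_compat; [apply Rabs_pos | apply Rabs_pos | exact Hx | exact Hy].
Qed.

Definition clamp (lo hi s : R) : R := Rmax lo (Rmin hi s).

Lemma clamp_in lo hi s : lo <= hi -> lo <= clamp lo hi s <= hi.
Proof. unfold clamp, Rmax, Rmin; repeat destruct Rle_dec; lra. Qed.

Lemma clamp_id lo hi s : lo <= s <= hi -> clamp lo hi s = s.
Proof. unfold clamp, Rmax, Rmin; repeat destruct Rle_dec; lra. Qed.

Lemma clamp_dist lo hi s s' : lo <= hi -> Rabs (clamp lo hi s - clamp lo hi s') <= Rabs (s - s').
Proof. unfold clamp, Rmax, Rmin; repeat destruct Rle_dec; intros; split_Rabs; lra. Qed.

(* Apply [MVT_gen] to [g] precomposed with the clamp onto the segment. *)
Lemma MVT_within (D : R -> Prop) g g' c d :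
  (forall s, Rmin c d <= s <= Rmax c d -> D s) ->
  (forall s, Rmin c d <= s <= Rmax c d -> is_deriv_within D g s (g' s)) ->
  exists xi, Rmin c d <= xi <= Rmax c d /\ g d - g c = g' xi * (d - c).
Proof.
  intros HD Hg.
  set (lo := Rmin c d) in *. set (hi := Rmax c d) in *.
  assert (Hc : lo <= c <= hi) by (split; [apply Rmin_l|apply Rmax_l]).
  assert (Hd : lo <= d <= hi) by (split; [apply Rmin_r|apply Rmax_r]).
  destruct (MVT_gen (fun s => g (clamp lo hi s)) c d g') as [xi [Hxi E]].
  - intros x Hx; fold lo hi in Hx. apply is_derive_Reals. intros eps Heps.
    destruct (proj1 (is_deriv_within_spec D g x (g' x)) (Hg x ltac:(lra)) eps Heps)
      as [de [Hde Hh]].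
    assert (P : 0 < Rmin de (Rmin (x - lo) (hi - x))) by (repeat apply Rmin_glb_lt; lra).
    exists (mkposreal _ P). intros h Hh0 Hhd; simpl in Hhd.
    apply Rmin_Rgt in Hhd as [Hh1 Hhd]. apply Rmin_Rgt in Hhd as [Hh2 Hh3].
    assert (Hin : lo <= x + h <= hi) by (split_Rabs; lra).
    rewrite !clamp_id by lra. apply Hh; auto.
  - intros x Hx; fold lo hi in Hx. apply continuity_pt_filterlim. intros P [e He].
    destruct (is_deriv_within_continuous D g x (g' x) (Hg x Hx) e (cond_pos e))
      as [de [Hde Hh]].
    exists (mkposreal de Hde). intros y Hy. apply He.
    change (Rabs (g (clamp lo hi y) - g (clamp lo hi x)) < e).
    assert (Hlh : lo <= hi) by lra.
    rewrite (clamp_id lo hi x) by exact Hx.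
    apply Hh; [apply HD, clamp_in, Hlh|].
    pose proof (clamp_dist lo hi y x Hlh) as Hdist.
    rewrite (clamp_id lo hi x) in Hdist by exact Hx.
    eapply Rle_lt_trans; [exact Hdist | exact Hy].
  - exists xi. split; [exact Hxi|]. rewrite !clamp_id in E by assumption. exact E.
Qed.

Definition continuous_on_segment (a b : R) (f : R -> R) : Prop :=
  forall x, a <= x <= b -> forall eps, 0 < eps -> exists delta, 0 < delta /\
    forall y, a <= y <= b -> Rabs (y - x) < delta -> Rabs (f y - f x) < eps.

Lemma continuous_clamp a b f : a <= b -> continuous_on_segment a b f ->
  forall z, continuous (fun s => f (clamp a b s)) z.
Proof.
  intros Hab Hf z P [e He].
  destruct (Hf (clamp a b z) (clamp_in a b z Hab) e (cond_pos e)) as [d [Hd H]].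
  exists (mkposreal d Hd). intros y Hy. apply He, H; [apply clamp_in, Hab|].
  eapply Rle_lt_trans; [apply clamp_dist, Hab | exact Hy].
Qed.

Lemma ex_RInt_segment a b f : a <= b -> continuous_on_segment a b f -> ex_RInt f a b.
Proof.
  intros Hab Hf. apply ex_RInt_ext with (fun s => f (clamp a b s)).
  { intros x Hx. rewrite Rmin_left, Rmax_right in Hx by exact Hab.
    rewrite clamp_id by lra. reflexivity. }
  apply (@ex_RInt_continuous R_CompleteNormedModule). intros; apply continuous_clamp; assumption.
Qed.

(* One-sided derivatives at the endpoints suffice: [x |-> RInt f a x - F x] has zero
   derivative on the segment, so [MVT_within] makes it constant. *)
Lemma RInt_is_deriv_within a b F f : a <= b ->
  (forall x, a <= x <= b -> is_deriv_within (fun y => a <= y <= b) F x (f x)) ->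
  continuous_on_segment a b f -> RInt f a b = F b - F a.
Proof.
  intros Hab HF Hf.
  set (fc := fun s => f (clamp a b s)).
  assert (Hfc : forall z, continuous fc z) by (apply continuous_clamp; assumption).
  assert (Hfc_seg : forall s, a <= s <= b -> fc s = f s)
    by (intros; unfold fc; rewrite clamp_id; auto).
  destruct (MVT_within (fun y => a <= y <= b) (fun y => RInt fc a y - F y) (fun _ => 0) a b)
    as [xi [_ E]]; rewrite ?Rmin_left, ?Rmax_right by exact Hab.
  - auto.
  - intros s Hs. replace 0 with (f s - f s) by ring.
    apply is_deriv_within_minus; [|exact (HF s Hs)].
    apply is_derive_is_deriv_within. rewrite <- Hfc_seg by exact Hs.
    apply (is_derive_RInt fc (fun y => RInt fc a y) a); [|apply Hfc].
    apply filter_forall. intros y.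
    apply (@RInt_correct R_CompleteNormedModule), (@ex_RInt_continuous R_CompleteNormedModule).
    intros; apply Hfc.
  - rewrite RInt_point in E. change zero with 0 in E.
    rewrite (RInt_ext f fc); [lra|].
    intros x Hx. rewrite Rmin_left, Rmax_right in Hx by exact Hab.
    symmetry; apply Hfc_seg; lra.
Qed.

Lemma MVT_increment_2d (P p1 p2 : R -> R -> R) x y x' y' :
  (forall x y, is_derive (fun s => P s y) x (p1 x y)) ->
  (forall x y, is_derive (fun s => P x s) y (p2 x y)) ->
  exists xi eta, Rabs (xi - x) <= Rabs (x' - x) /\ Rabs (eta - y) <= Rabs (y' - y) /\
    P x' y' - P x y = p1 xi y' * (x' - x) + p2 x eta * (y' - y).
Proof.
  intros H1 H2.
  destruct (MVT_gen (fun s => P s y') x x' (fun s => p1 s y')) as [xi [Hxi E1]].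
  { intros; apply H1. }
  { intros s _. apply continuity_pt_filterlim.
    apply (@ex_derive_continuous _ R_NormedModule (fun s => P s y')). exists (p1 s y'); apply H1. }
  destruct (MVT_gen (fun s => P x s) y y' (p2 x)) as [eta [Heta E2]].
  { intros; apply H2. }
  { intros s _. apply continuity_pt_filterlim.
    apply (@ex_derive_continuous _ R_NormedModule (fun s => P x s)). exists (p2 x s); apply H2. }
  exists xi, eta. split; [apply Rabs_between, Hxi|]. split; [apply Rabs_between, Heta|].
  simpl in E1, E2. rewrite <- E1, <- E2. ring.
Qed.

Lemma is_deriv_within_comp2 (D : R -> Prop) (P p1 p2 : R -> R -> R) F F' x0 :
  (forall x y, is_derive (fun s => P s y) x (p1 x y)) ->
  (forall x y, is_derive (fun s => P x s) y (p2 x y)) ->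
  continuity_2d_pt p1 x0 (F x0) -> continuity_2d_pt p2 x0 (F x0) ->
  is_deriv_within D F x0 F' ->
  is_deriv_within D (fun x => P x (F x)) x0 (p1 x0 (F x0) + p2 x0 (F x0) * F').
Proof.
  intros H1 H2 C1 C2 HF. apply is_deriv_within_spec. intros eps Heps.
  set (K := Rabs F' + 1). set (U := Rabs (p2 x0 (F x0)) + 1).
  assert (HK : 0 < K) by (unfold K; pose proof (Rabs_pos F'); lra).
  assert (HU : 0 < U) by (unfold U; pose proof (Rabs_pos (p2 x0 (F x0))); lra).
  destruct (C1 (mkposreal (eps / 3) ltac:(lra))) as [d1 E1].
  destruct (C2 (mkposreal (eps / (3 * K)) ltac:(apply Rdiv_lt_0_compat; lra))) as [d2 E2].
  destruct (is_deriv_within_continuous D F x0 F' HF (Rmin d1 d2)) as [dF [HdF EF]].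
  { apply Rmin_glb_lt; apply cond_pos. }
  destruct (proj1 (is_deriv_within_spec D F x0 F') HF (Rmin 1 (eps / (3 * U))))
    as [dq [Hdq Eq]].
  { apply Rmin_glb_lt; [lra | apply Rdiv_lt_0_compat; lra]. }
  exists (Rmin d1 (Rmin dF dq)); split; [repeat apply Rmin_glb_lt; try apply cond_pos; assumption|].
  intros h Hh0 HD Hh. apply Rmin_Rgt in Hh as [Hh1 Hh]. apply Rmin_Rgt in Hh as [HhF Hhq].
  specialize (Eq h Hh0 HD Hhq). apply Rmin_Rgt in Eq as [Eq1 Eq2].
  assert (Hy : Rabs (F (x0 + h) - F x0) < Rmin d1 d2)
    by (apply EF; [exact HD | replace (x0 + h - x0) with h by ring; exact HhF]).
  apply Rmin_Rgt in Hy as [Hy1 Hy2].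
  destruct (MVT_increment_2d P p1 p2 x0 (F x0) (x0 + h) (F (x0 + h)) H1 H2)
    as [xi [eta [Hxi [Heta Einc]]]].
  replace (x0 + h - x0) with h in Hxi, Einc by ring.
  set (q := (F (x0 + h) - F x0) / h) in *.
  replace ((P (x0 + h) (F (x0 + h)) - P x0 (F x0)) / h - (p1 x0 (F x0) + p2 x0 (F x0) * F'))
    with ((p1 xi (F (x0 + h)) - p1 x0 (F x0)) + (p2 x0 eta - p2 x0 (F x0)) * q
          + p2 x0 (F x0) * (q - F')) by (rewrite Einc; unfold q; field; exact Hh0).
  assert (B1 : Rabs (p1 xi (F (x0 + h)) - p1 x0 (F x0)) < eps / 3) by (apply E1; lra).
  assert (Hq : Rabs q <= K).
  { pose proof (Rabs_triang F' (q - F')) as Htri.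
    replace (F' + (q - F')) with q in Htri by ring. unfold K; lra. }
  assert (B2 : Rabs ((p2 x0 eta - p2 x0 (F x0)) * q) <= eps / 3).
  { replace (eps / 3) with (eps / (3 * K) * K) by (field; lra).
    apply Rabs_mult_le; [left; apply E2; [|lra] | exact Hq].
    unfold Rminus; rewrite Rplus_opp_r, Rabs_R0; apply cond_pos. }
  assert (B3 : Rabs (p2 x0 (F x0) * (q - F')) <= eps / 3).
  { replace (eps / 3) with (U * (eps / (3 * U))) by (field; lra).
    apply Rabs_mult_le; [unfold U | ]; lra. }
  pose proof (Rabs_triang (p1 xi (F (x0 + h)) - p1 x0 (F x0) + (p2 x0 eta - p2 x0 (F x0)) * q)
    (p2 x0 (F x0) * (q - F'))).
  pose proof (Rabs_triang (p1 xi (F (x0 + h)) - p1 x0 (F x0)) ((p2 x0 eta - p2 x0 (F x0)) * q)).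
  lra.
Qed.

Lemma tdom_between T t t' s :
  tdom T t -> tdom T t' -> Rmin t t' <= s <= Rmax t t' -> tdom T s.
Proof.
  unfold tdom, Rmin, Rmax. intros [Ht HtT] [Ht' Ht'T].
  destruct Rle_dec; intros Hs; (split; [lra|]); destruct T; simpl in *; lra.
Qed.

Lemma cont2_on_slice a b T F t :
  cont2_on a b T F -> tdom T t -> continuous_on_segment a b (fun x => F x t).
Proof.
  intros C Ht x Hx eps Heps. destruct (C x t Hx Ht eps Heps) as [d [Hd H]].
  exists d. split; [exact Hd|]. intros y Hy Hyx. apply H; auto.
  unfold Rminus; rewrite Rplus_opp_r, Rabs_R0; exact Hd.
Qed.

Lemma cont2_on_minus a b T F G :
  cont2_on a b T F -> cont2_on a b T G -> cont2_on a b T (fun x s => F x s - G x s).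
Proof.
  intros CF CG x t Hx Ht eps Heps.
  destruct (CF x t Hx Ht (eps / 2)) as [d1 [Hd1 H1]]; [lra|].
  destruct (CG x t Hx Ht (eps / 2)) as [d2 [Hd2 H2]]; [lra|].
  exists (Rmin d1 d2). split; [apply Rmin_glb_lt; assumption|].
  intros y s Hy Hs Hyx Hst.
  apply Rmin_Rgt in Hyx as [Hyx1 Hyx2]. apply Rmin_Rgt in Hst as [Hst1 Hst2].
  specialize (H1 y s Hy Hs Hyx1 Hst1). specialize (H2 y s Hy Hs Hyx2 Hst2).
  replace (F y s - G y s - (F x t - G x t)) with ((F y s - F x t) - (G y s - G x t)) by ring.
  eapply Rle_lt_trans; [apply Rabs_triang|]. rewrite Rabs_Ropp. lra.
Qed.

(* Cover [a,b] by the neighbourhoods given by joint continuity at each (x0, t) and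
   take a Lebesgue number of the cover. *)
Lemma cont2_on_uniform_time a b T F t : cont2_on a b T F -> tdom T t ->
  forall eps, 0 < eps -> exists delta, 0 < delta /\
    forall x s, a <= x <= b -> tdom T s -> Rabs (s - t) < delta ->
      Rabs (F x s - F x t) < eps.
Proof.
  intros HF Ht eps Heps.
  assert (Hloc : forall x0, exists d : posreal, a <= x0 <= b ->
    forall y s, a <= y <= b -> tdom T s -> Rabs (y - x0) < d -> Rabs (s - t) < d ->
      Rabs (F y s - F x0 t) < eps / 2).
  { intros x0. destruct (classic (a <= x0 <= b)) as [Hx0|Hx0].
    - destruct (HF x0 t Hx0 Ht (eps / 2)) as [d [Hd H]]; [lra|].
      exists (mkposreal d Hd). intros _. exact H.
    - exists (mkposreal 1 Rlt_0_1). intros; contradiction. }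
  destruct (functional_choice _ Hloc) as [delta Hdelta].
  destruct (compactness_value_1d a b delta) as [d Hd].
  exists d. split; [apply cond_pos|]. intros x s Hx Hs Hst.
  destruct (NNPP _ (Hd x Hx)) as [x0 [Hx0 [Hxx0 Hdx0]]].
  assert (A1 := Hdelta x0 Hx0 x s Hx Hs Hxx0 ltac:(lra)).
  assert (A2 : Rabs (F x t - F x0 t) < eps / 2).
  { apply (Hdelta x0 Hx0 x t Hx Ht Hxx0).
    unfold Rminus; rewrite Rplus_opp_r, Rabs_R0; apply cond_pos. }
  replace (F x s - F x t) with ((F x s - F x0 t) - (F x t - F x0 t)) by ring.
  eapply Rle_lt_trans; [apply Rabs_triang|]. rewrite Rabs_Ropp. lra.
Qed.

Lemma cont2_on_uniform_deriv_time a b T F Ft t : tdom T t ->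
  (forall x s, a <= x <= b -> tdom T s -> is_deriv_within (tdom T) (F x) s (Ft x s)) ->
  cont2_on a b T Ft ->
  forall eps, 0 < eps -> exists delta, 0 < delta /\
    forall x s, a <= x <= b -> tdom T s -> Rabs (s - t) < delta ->
      Rabs (F x s - F x t - (s - t) * Ft x t) <= eps * Rabs (s - t).
Proof.
  intros Ht HF CFt eps Heps.
  destruct (cont2_on_uniform_time a b T Ft t CFt Ht eps Heps) as [d [Hd Hunif]].
  exists d. split; [exact Hd|]. intros x s Hx Hs Hst.
  assert (Hbetween : forall r, Rmin t s <= r <= Rmax t s -> tdom T r)
    by (intros; apply (tdom_between T t s); assumption).
  destruct (MVT_within (tdom T) (F x) (Ft x) t s) as [xi [Hxi E]]; [exact Hbetween| |].
  { intros r Hr. apply HF; [exact Hx | apply Hbetween, Hr]. }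
  rewrite E. replace (Ft x xi * (s - t) - (s - t) * Ft x t) with ((Ft x xi - Ft x t) * (s - t))
    by ring.
  rewrite Rabs_mult. apply Rmult_le_compat_r; [apply Rabs_pos|]. left.
  apply Hunif; [exact Hx | apply Hbetween, Hxi |].
  apply Rle_lt_trans with (Rabs (s - t)); [apply Rabs_between, Hxi | exact Hst].
Qed.

Lemma is_deriv_within_RInt a b T (F Ft : R -> R -> R) t : a <= b -> tdom T t ->
  (forall x s, a <= x <= b -> tdom T s -> is_deriv_within (tdom T) (F x) s (Ft x s)) ->
  cont2_on a b T F -> cont2_on a b T Ft ->
  is_deriv_within (tdom T) (fun s => RInt (fun x => F x s) a b) t (RInt (fun x => Ft x t) a b).
Proof.
  intros Hab Ht HF CF CFt. apply is_deriv_within_spec. intros eps Heps.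
  set (e := eps / (2 * (b - a + 1))).
  assert (He : 0 < e) by (unfold e; apply Rdiv_lt_0_compat; lra).
  destruct (cont2_on_uniform_deriv_time a b T F Ft t Ht HF CFt e He) as [d [Hd Hunif]].
  exists d. split; [exact Hd|]. intros h Hh0 Hth Hh.
  assert (Hex : forall G s, cont2_on a b T G -> tdom T s -> ex_RInt (fun x => G x s) a b)
    by (intros; apply ex_RInt_segment; [exact Hab | apply (cont2_on_slice a b T); assumption]).
  set (k := fun x => F x (t + h) - F x t - h * Ft x t).
  assert (Hk : is_RInt k a b (RInt (fun x => F x (t + h)) a b - RInt (fun x => F x t) a b
                              - h * RInt (fun x => Ft x t) a b)).
  { apply (@is_RInt_minus R_NormedModule); [apply (@is_RInt_minus R_NormedModule)|];
      [| | apply (@is_RInt_scal R_NormedModule)];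
      apply (@RInt_correct R_CompleteNormedModule), Hex; assumption. }
  assert (Hbound : Rabs (RInt k a b) <= (b - a) * (e * Rabs h)).
  { apply abs_RInt_le_const; [exact Hab | eexists; exact Hk|].
    intros x Hx. pose proof (Hunif x (t + h) Hx Hth) as Hx_unif.
    replace (t + h - t) with h in Hx_unif by ring. exact (Hx_unif Hh). }
  rewrite (is_RInt_unique k a b _ Hk) in Hbound.
  assert (Hah : 0 < Rabs h) by (apply Rabs_pos_lt, Hh0).
  replace ((RInt (fun x => F x (t + h)) a b - RInt (fun x => F x t) a b) / h
           - RInt (fun x => Ft x t) a b)
    with ((RInt (fun x => F x (t + h)) a b - RInt (fun x => F x t) a b
           - h * RInt (fun x => Ft x t) a b) / h) by (field; exact Hh0).
  unfold Rdiv. rewrite Rabs_mult, Rabs_inv.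
  apply Rle_lt_trans with ((b - a) * (e * Rabs h) * / Rabs h).
  { apply Rmult_le_compat_r; [left; apply Rinv_0_lt_compat, Hah | exact Hbound]. }
  replace ((b - a) * (e * Rabs h) * / Rabs h) with (eps * ((b - a) / (2 * (b - a + 1))))
    by (unfold e; field; lra).
  assert (Hfrac : (b - a) / (2 * (b - a + 1)) < 1)
    by (apply Rmult_lt_reg_r with (2 * (b - a + 1)); [lra|]; field_simplify; lra).
  nra.
Qed.

Lemma smooth_on_cont3 T F : smooth_on T F -> cont3_on T F.
Proof.
  intros [D [HD0 [_ HDc]]] x1 x2 t Ht eps Heps.
  destruct (HDc nil x1 x2 t Ht eps Heps) as [d [Hd H]].
  exists d. split; [exact Hd|]. intros y1 y2 s Hs Hy1 Hy2 Hst.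
  rewrite <- (HD0 y1 y2 s Hs), <- (HD0 x1 x2 t Ht). auto.
Qed.

Lemma cont3_on_continuity_2d T F t x y :
  cont3_on T F -> tdom T t -> continuity_2d_pt (fun x y => F x y t) x y.
Proof.
  intros C Ht eps. destruct (C x y t Ht eps (cond_pos eps)) as [d [Hd H]].
  exists (mkposreal d Hd). intros u v Hu Hv. apply H; auto.
  unfold Rminus; rewrite Rplus_opp_r, Rabs_R0; exact Hd.
Qed.

(* Since [u = grad^perp psi], the kinematic condition on a curve moving with the fluid
   reads [ft = u2 - u1 fx = d/dx psi(x, f x t, t)]. *)
Lemma RInt_dt_material_curve T (psi u1 u2 : R -> R -> R -> R) a b f fx ft t :
  a <= b -> tdom T t -> cont3_on T u1 -> cont3_on T u2 ->
  partial_on T psi (fun x1 x2 t => - u1 x1 x2 t) X2 -> partial_on T psi u2 X1 ->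
  C1_rect a b T f fx ft ->
  (forall x, a <= x <= b -> u2 x (f x t) t = fx x t * u1 x (f x t) t + ft x t) ->
  RInt (fun x => ft x t) a b = psi b (f b t) t - psi a (f a t) t.
Proof.
  intros Hab Ht C1 C2 P1 P2 [Hfx [_ [_ [_ Cft]]]] Hkin.
  apply (RInt_is_deriv_within a b (fun x => psi x (f x t) t));
    [exact Hab | | apply (cont2_on_slice a b T); assumption].
  intros x Hx.
  replace (ft x t) with (u2 x (f x t) t + - u1 x (f x t) t * fx x t)
    by (rewrite Hkin by exact Hx; ring).
  apply (is_deriv_within_comp2 _ (fun x y => psi x y t) (fun x y => u2 x y t)
           (fun x y => - u1 x y t) (fun x => f x t)).
  - intros x' y. apply is_deriv_within_True, (P2 x' y t Ht).
  - intros x' y. apply is_deriv_within_True, (P1 x' y t Ht).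
  - apply (cont3_on_continuity_2d T); assumption.
  - apply continuity_2d_pt_opp, (cont3_on_continuity_2d T); assumption.
  - apply Hfx; assumption.
Qed.

Theorem lemma1
  (T : Rbar) (HT : Rbar_lt (Finite 0) T)
  (psi u1 u2 theta : R -> R -> R -> R)
  (Hpsi : smooth_on T psi)
  (Hu1 : smooth_on T u1) (Hu2 : smooth_on T u2)
  (* u = grad^perp psi = (- d psi / d x2, d psi / d x1) *)
  (Hu1psi : partial_on T psi (fun x1 x2 t => - u1 x1 x2 t) X2)
  (Hu2psi : partial_on T psi u2 X1)
  (Htheta : smooth_on T theta)
  (Htransport : exists th1 th2 tht : R -> R -> R -> R,
      partial_on T theta th1 X1 /\ partial_on T theta th2 X2 /\
      partial_on T theta tht Tm /\
      forall x1 x2 t, tdom T t ->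
        tht x1 x2 t + u1 x1 x2 t * th1 x1 x2 t + u2 x1 x2 t * th2 x1 x2 t = 0)
  (* sharp front at time T *)
  (a b : R) (Hab : a < b)
  (fp fm fpx fpt fmx fmt : R -> R -> R)
  (Hfp : C1_rect a b T fp fpx fpt) (Hfm : C1_rect a b T fm fmx fmt)
  (Hi : forall x1 t, a <= x1 <= b -> tdom T t -> fm x1 t < fp x1 t)
  (Hiip : forall x1 t, a <= x1 <= b -> tdom T t ->
      u2 x1 (fp x1 t) t = fpx x1 t * u1 x1 (fp x1 t) t + fpt x1 t)
  (Hiim : forall x1 t, a <= x1 <= b -> tdom T t ->
      u2 x1 (fm x1 t) t = fmx x1 t * u1 x1 (fm x1 t) t + fmt x1 t)
  (Hiii : forall x1, a <= x1 <= b ->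
      filterlim (fun t => fp x1 t - fm x1 t) (at_T T) (locally 0))
  (Hiv : exists M, forall x1 t, a <= x1 <= b -> tdom T t ->
      Rabs (fp x1 t - fm x1 t) <= M) :
  forall t, tdom T t ->
    is_deriv_within (tdom T) (fun s => RInt (fun x1 => fp x1 s - fm x1 s) a b) t
      (psi b (fp b t) t - psi b (fm b t) t + psi a (fm a t) t - psi a (fp a t) t).
Proof.
  intros t Ht.
  assert (Hab' : a <= b) by lra.
  assert (Hu1c := smooth_on_cont3 T u1 Hu1). assert (Hu2c := smooth_on_cont3 T u2 Hu2).
  assert (Ep := RInt_dt_material_curve T psi u1 u2 a b fp fpx fpt t Hab' Ht Hu1c Hu2c
                  Hu1psi Hu2psi Hfp (fun x Hx => Hiip x t Hx Ht)).
  assert (Em := RInt_dt_material_curve T psi u1 u2 a b fm fmx fmt t Hab' Ht Hu1c Hu2c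
                  Hu1psi Hu2psi Hfm (fun x Hx => Hiim x t Hx Ht)).
  destruct Hfp as [_ [Dfp [Cfp [_ Cfpt]]]], Hfm as [_ [Dfm [Cfm [_ Cfmt]]]].
  replace (psi b (fp b t) t - psi b (fm b t) t + psi a (fm a t) t - psi a (fp a t) t)
    with (RInt (fun x => fpt x t - fmt x t) a b).
  - apply (is_deriv_within_RInt a b T (fun x s => fp x s - fm x s)
             (fun x s => fpt x s - fmt x s)); try apply cont2_on_minus; try assumption.
    intros x s Hx Hs. apply is_deriv_within_minus; [apply Dfp | apply Dfm]; assumption.
  - transitivity (RInt (fun x => fpt x t) a b - RInt (fun x => fmt x t) a b).
    + apply (@RInt_minus R_CompleteNormedModule);
        apply ex_RInt_segment, (cont2_on_slice a b T); assumption.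
    + rewrite Ep, Em. lra.
Qed.
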